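(* Let $w_1,\dots,w_l\in\mathbb{C}$, $z_1,\dots,z_l\in\mathbb{T}$ and $R>0$. There exists $b\in\mathbb{C}$ with $|b|\le 2lR$ such that $|w_m+bz_m|\ge R$ for all $m=1,\dots,l$.
   Context: $\mathbb{T}$ denotes the unit circle in $\mathbb{C}$. *)

From HB Require Import structures.
From mathcomp Require Import all_boot all_order all_algebra.
From mathcomp Require Import complex.

(* Multiplying by conj z_m does not change norms, so it suffices to find a
   real b at distance at least r from every a_m = -Re (w_m conj z_m).  Among
   the l + 1 candidates b = 2 r k, k = 0, ..., l, each open interval of
   radius r around some a_m contains at most one, so some candidate avoids
   all l intervals. *)
From mathcomp Require Import all_boot all_order all_algebra.
From mathcomp Require Import complex.
From mathcomp Require Import lra.
Set Implicit Arguments.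
Unset Strict Implicit.
Unset Printing Implicit Defensive.
Import Order.TTheory GRing.Theory Num.Theory.
Local Open Scope ring_scope.
Local Open Scope complex_scope.

Lemma exists_unblocked (T : finType) (n : nat) (blocks : 'I_n -> pred T) :
  (forall m, {in blocks m &, forall k1 k2, k1 = k2}) -> (n < #|T|)%N ->
  exists k, forall m, k \notin blocks m.
Proof.
move=> blocks_uniq card_T.
suff /existsP [k /forallP free_k] : [exists k, [forall m, k \notin blocks m]].
  by exists k.
apply: contraLR card_T => /existsPn all_blocked.
have /fin_all_exists [f blocked_f] : forall k, exists m, k \in blocks m.
  by move=> k; have /forallPn [m] := all_blocked k; rewrite negbK; exists m.
have f_inj : injective f.
  by move=> k1 k2 eq_f; apply: (blocks_uniq (f k1)); rewrite // eq_f.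
by rewrite -leqNgt -[n]card_ord; apply: leq_card f_inj.
Qed.

Lemma grid_near_uniq (R : realDomainType) (x r : R) (i j : nat) :
  `|x + 2 * r * i%:R| < r -> `|x + 2 * r * j%:R| < r -> i = j.
Proof.
rewrite !ltr_norml => /andP[lo_i hi_i] /andP[lo_j hi_j].
by case: (ltngtP i j) => //; rewrite -(ler_nat R) -natr1 => ?; exfalso; nra.
Qed.

Lemma exists_grid_point_far (R : realDomainType) (n : nat) (a : 'I_n -> R)
    (r : R) :
  exists k : 'I_n.+1, forall m, r <= `|a m + 2 * r * k%:R|.
Proof.
pose near m := [pred k : 'I_n.+1 | `|a m + 2 * r * k%:R| < r].
have near_uniq m : {in near m &, forall k1 k2, k1 = k2}.
  move=> k1 k2; rewrite !inE => near1 near2.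
  by apply: val_inj; apply: grid_near_uniq near1 near2.
have [|k far_k] := exists_unblocked near_uniq; first by rewrite card_ord.
by exists k => m; rewrite leNgt; apply: far_k.
Qed.

Lemma normc_addr_unit (R : rcfType) (w b z : R[i]) :
  `|z| = 1 -> `|w + b * z| = `|w * z^* + b|.
Proof.
move=> z_unit; have zz : z * z^* = 1 by rewrite -sqr_normc z_unit expr1n.
have -> : w + b * z = (w * z^* + b) * z.
  by rewrite mulrDl -mulrA [z^* * z]mulrC zz mulr1.
by rewrite normrM z_unit mulr1.
Qed.

Lemma normc_ge_Re_addr (R : rcfType) (u : R[i]) (t : R) :
  `|complex.Re u + t|%:C <= `|u + t%:C|.
Proof. by have := normc_ge_Re (u + t%:C); case: u. Qed.

Theorem lemma4p14 (R : rcfType) (l : nat) (w z : 'I_l -> R[i]) (r : R) :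
  (forall m : 'I_l, `|z m| = 1) -> 0 < r ->
  exists b : R[i], `|b| <= (2 * l%:R * r)%:C /\
    forall m : 'I_l, r%:C <= `|w m + b * z m|.
Proof.
move=> z_unit r_gt0.
have [k far_k] := exists_grid_point_far (fun m => complex.Re (w m * (z m)^*)) r.
exists (2 * r * k%:R)%:C; split.
  rewrite normc_def /= expr0n addr0 sqrtr_sqr lecR ger0_norm; last first.
    by rewrite !mulr_ge0 // ltW.
  have k_le_l : k%:R <= l%:R :> R by rewrite ler_nat -ltnS.
  nra.
move=> m; rewrite normc_addr_unit //.
by apply: le_trans (normc_ge_Re_addr _ _); rewrite lecR.
Qed.
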